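(* Let $G$ be a graph of order $n$. The following are equivalent: (1) every component of $G$ with at least two vertices is a corona; (2) $\gamma_{\rm cer}(G)=n$; (3) $\Gamma_{\rm cer}(G)=n$.
   Context: All graphs are finite and simple. A set $D\subseteq V_G$ is a dominating set of $G$ if every vertex of $V_G-D$ has a neighbor in $D$. A set $D$ is a certified dominating set of $G$ if $D$ is dominating and every vertex of $D$ has either zero or at least two neighbors in $V_G-D$; it is minimal if no proper subset is a certified dominating set. $\gamma_{\rm cer}(G)$ is the minimum cardinality of a certified dominating set, and $\Gamma_{\rm cer}(G)$ is the maximum cardinality of a minimal certified dominating set. A graph is a corona if it equals $H\circ K_1$ for some graph $H$, i.e., it is obtained from $H$ by attaching one new pendant vertex to each vertex of $H$. *)

(* A finite simple graph is a symmetric irreflexive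
   relation e : rel T on a finite type T (vertex set = T, order n = #|T|). *)
From mathcomp Require Import all_boot.
Set Implicit Arguments. Unset Strict Implicit. Unset Printing Implicit Defensive.

Section Graph.
Variables (T : finType) (e : rel T).

Definition nbhd (v : T) : {set T} := [set u | e v u].

Definition dominating (D : {set T}) : bool :=
  [forall v, (v \notin D) ==> [exists u, (u \in D) && e v u]].

Definition certified (D : {set T}) : bool :=
  dominating D &&
  [forall v, (v \in D) ==> ((#|nbhd v :\: D| == 0) || (2 <= #|nbhd v :\: D|))].

Definition minimal_certified (D : {set T}) : bool :=
  certified D && [forall E : {set T}, (E \proper D) ==> ~~ certified E].

(* gamma_cer: minimum cardinality of a certified dominating set
   (V itself is always certified, so #|T| is a valid neutral upper bound) *)
Definition gamma_cer : nat :=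
  \big[minn/#|T|]_(D : {set T} | certified D) #|D|.

Definition Gamma_cer : nat :=
  \max_(D : {set T} | minimal_certified D) #|D|.

Definition component (v : T) : {set T} := [set u | connect e v u].

(* The subgraph induced by C is a corona H o K1: C splits into a set S
   (vertices of H) and a set f @: S of pendant vertices, f injective on S,
   each f s having s as its unique neighbour. *)
Definition is_corona (C : {set T}) : Prop :=
  exists (S : {set T}) (f : T -> T),
    [/\ S \subset C, {in S &, injective f},
        C = S :|: f @: S, [disjoint S & f @: S] &
        forall s, s \in S -> nbhd (f s) = [set s]].

End Graph.

(* Let C be a corona component, S its non-pendant side and f s the pendant vertex at
   s.  In a certified set D, every s in S belongs to D: otherwise f s must be in D to be
   dominated, and then has exactly one neighbour, s, outside D.  Then every f s belongs
   to D too, since otherwise it would be the only neighbour of s outside D.  Hence if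
   all nontrivial components are coronas, V is the only certified set, which is what
   gamma_cer = n and Gamma_cer = n both say.

   Conversely, suppose V is the only certified set.  A vertex with two pendant
   neighbours l1, l2 would make V - {l1, l2} certified.  A vertex of degree at least
   two without pendant neighbour ("bare") would also give a proper certified set
   V - U: take J maximal independent among the bare vertices having at least two bare
   neighbours, let W be the bare vertices outside J, and let U be W together with every
   pendant vertex whose neighbour has exactly one neighbour in W.  Hence every vertex
   of degree at least two has exactly one pendant neighbour, and each nontrivial
   component is a corona over its vertices of degree at least two (or is K2). *)

From mathcomp Require Import all_boot.
Set Implicit Arguments. Unset Strict Implicit. Unset Printing Implicit Defensive.

Section Certified.
Variables (T : finType) (e : rel T).

Lemma certifiedP (D : {set T}) :
  reflect ((forall v, v \notin D -> exists2 u, u \in D & e v u) /\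
           (forall v, v \in D -> #|nbhd e v :\: D| != 1))
          (certified e D).
Proof.
have card_ne1 n : ((n == 0) || (2 <= n)) = (n != 1) by case: n => [|[|n]].
apply: (iffP andP) => [[/forallP dom /forallP cnt]|[dom cnt]]; split.
- move=> v vD; have /existsP[u /andP[uD evu]] := implyP (dom v) vD.
  by exists u.
- by move=> v vD; rewrite -card_ne1; exact: implyP (cnt v) vD.
- apply/forallP=> v; apply/implyP=> /dom[u uD evu].
  by apply/existsP; exists u; rewrite uD.
- by apply/forallP=> v; apply/implyP=> /cnt; rewrite card_ne1.
Qed.

Lemma certified_setCP (U : {set T}) :
  reflect ((forall u, u \in U -> exists2 w, w \notin U & e u w) /\
           (forall d, d \notin U -> #|nbhd e d :&: U| != 1))
          (certified e (~: U)).
Proof.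
apply: (iffP (certifiedP _)) => [[dom cnt]|[dom cnt]]; split.
- by move=> u uU; have [|w] := dom u; rewrite ?inE ?negbK //; exists w.
- by move=> d dU; have := cnt d; rewrite setDE setCK inE; apply.
- by move=> u; rewrite inE negbK => /dom[w wU euw]; exists w; rewrite ?inE.
- by move=> d; rewrite inE => /cnt; rewrite setDE setCK.
Qed.

Lemma certified_setT : certified e setT.
Proof.
by rewrite -setC0; apply/certified_setCP; split=> [u|d _]; rewrite ?inE ?setI0 ?cards0.
Qed.

End Certified.

Section Graph.
Variables (T : finType) (e : rel T).
Hypotheses (e_sym : symmetric e) (e_irr : irreflexive e).

Local Notation deg x := #|nbhd e x|.

Lemma in_nbhd x y : (y \in nbhd e x) = e x y.
Proof. by rewrite inE. Qed.

Lemma nbhd_pendant x y : deg x = 1 -> e x y -> nbhd e x = [set y].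
Proof.
move=> /eqP/cards1P[z nbx] exy; move: (exy); rewrite -in_nbhd nbx.
by rewrite inE => /eqP->.
Qed.

Lemma pendant_adj_uniq x y z : deg x = 1 -> e x y -> e x z -> y = z.
Proof.
by move=> dx exy; rewrite -in_nbhd (nbhd_pendant dx exy) inE => /eqP.
Qed.

Lemma adj_neq x y : e x y -> x != y.
Proof. by apply: contraTneq => ->; rewrite e_irr. Qed.

(** * Components *)

Lemma mem_component v : v \in component e v.
Proof. by rewrite inE connect0. Qed.

Lemma component_adj v x y : x \in component e v -> e x y -> y \in component e v.
Proof. by rewrite !inE => vx exy; exact: connect_trans vx (connect1 exy). Qed.

Lemma component_eq v x : x \in component e v -> component e x = component e v.
Proof.
rewrite inE => vx; apply/setP=> y; rewrite !inE.
by rewrite (same_connect (sym_connect_sym e_sym) vx).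
Qed.

Lemma component_subset (A : {set T}) v :
  v \in A -> (forall x y, x \in A -> e x y -> y \in A) -> component e v \subset A.
Proof.
move=> vA closedA; apply/subsetP=> u; rewrite inE => vu.
have clA := intro_closed (sym_connect_sym e_sym) (fun x y exy xA => closedA x y xA exy).
by rewrite -(closed_connect clA vu).
Qed.

Lemma component_card_gt1 v u : e v u -> 1 < #|component e v|.
Proof.
move=> evu; have: [set v; u] \subset component e v.
  by rewrite subUset !sub1set mem_component (component_adj (mem_component v) evu).
by move/subset_leq_card; rewrite cards2 (adj_neq evu).
Qed.

Lemma corona_subset_certified (C D : {set T}) :
  (forall x y, x \in C -> e x y -> y \in C) -> is_corona e C -> certified e D ->
  C \subset D.
Proof.
move=> closedC [S [f [SC _ defC _ nbf]]] /certifiedP[dom cnt].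
have SD s : s \in S -> s \in D.
  move=> sS; apply: contraT => sD.
  have fsD : f s \in D.
    apply: contraT => /dom[u uD]; rewrite -in_nbhd nbf // inE => /eqP us.
    by rewrite -us uD in sD.
  suff: nbhd e (f s) :\: D = [set s] by move=> nbfs; have := cnt _ fsD; rewrite nbfs cards1.
  by apply/setP=> x; rewrite nbf // !inE andbC; case: eqP => // ->.
have fSD s : s \in S -> f s \in D.
  move=> sS; apply: contraT => fsD.
  suff: nbhd e s :\: D = [set f s] by move=> nbs; have := cnt _ (SD s sS); rewrite nbs cards1.
  apply/setP=> w; rewrite !inE; apply/andP/eqP=> [[wD esw]|->]; last first.
    by rewrite fsD; split; rewrite // e_sym -in_nbhd nbf ?inE.
  have: w \in C by apply: closedC esw; rewrite (subsetP SC).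
  rewrite defC => /setUP[/SD|/imsetP[t tS wE]]; first by rewrite (negbTE wD).
  by move: esw; rewrite wE e_sym -in_nbhd nbf // inE => /eqP->.
rewrite defC subUset; apply/andP; split; apply/subsetP=> x; first exact: SD.
by case/imsetP=> s /fSD ? ->.
Qed.

Lemma corona_certified_setT :
  (forall v, 2 <= #|component e v| -> is_corona e (component e v)) ->
  forall D : {set T}, certified e D -> D = setT.
Proof.
move=> corona D certD; apply/setP=> v; rewrite inE; apply: contraT => vD.
have [u _ evu] := (certifiedP _ _ certD).1 v vD.
have: component e v \subset D.
  apply: corona_subset_certified certD; last exact/corona/component_card_gt1/evu.
  exact: component_adj.
by move/subsetP/(_ v (mem_component v)); rewrite (negbTE vD).
Qed.

Lemma certified_setC_pendants s l1 l2 :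
  e s l1 -> e s l2 -> deg l1 = 1 -> deg l2 = 1 -> l1 != l2 ->
  certified e (~: [set l1; l2]).
Proof.
move=> esl1 esl2 dl1 dl2 l12; have sU : s \notin [set l1; l2].
  by rewrite !inE negb_or !adj_neq.
have adj_s l : l \in [set l1; l2] -> e l s.
  by rewrite !inE => /orP[]/eqP->; rewrite e_sym.
apply/certified_setCP; split=> [u uU|d dU]; first by exists s; rewrite ?adj_s.
have [->|ds] := eqVneq d s.
  suff /setIidPr-> : [set l1; l2] \subset nbhd e s by rewrite cards2 l12.
  by rewrite subUset !sub1set !in_nbhd esl1 esl2.
suff -> : nbhd e d :&: [set l1; l2] = set0 by rewrite cards0.
apply/setP=> l; rewrite in_setI in_set0 in_nbhd; apply/negP=> /andP[edl lU].
have dl : deg l = 1 by move: lU; rewrite !inE => /orP[]/eqP->.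
have eld : e l d by rewrite e_sym.
by rewrite (pendant_adj_uniq dl eld (adj_s l lU)) eqxx in ds.
Qed.

(** * Pendant neighbours *)

Lemma exists_dominating_independent (A : {set T}) :
  exists J : {set T},
    [/\ J \subset A, {in J &, forall x y, ~~ e x y} &
        {in A, forall w, w \notin J -> exists2 j, j \in J & e w j}].
Proof.
pose indep := [pred J : {set T} | (J \subset A) && [forall x in J, forall y in J, ~~ e x y]].
have [|J /maxsetP[/andP[JA /forall_inP Jind] Jmax] _] := @maxset_exists _ indep set0.
  by rewrite inE sub0set; apply/forall_inP=> x; rewrite inE.
have indJ : {in J &, forall x y, ~~ e x y} by move=> x y /Jind/forall_inP; apply.
exists J; split=> // w wA wJ; apply/exists_inP; apply: contraNT wJ => noadj.
suff <- : w |: J = J by rewrite setU11.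
apply: Jmax (subsetUr _ _); rewrite inE subUset sub1set wA JA /=.
have nadj j : j \in J -> ~~ e w j.
  by move=> jJ; apply: contra noadj => ewj; apply/exists_inP; exists j.
apply/forall_inP=> x /setU1P[->|xJ]; apply/forall_inP=> y /setU1P[->|yJ].
- by rewrite e_irr.
- exact: nadj.
- by rewrite e_sym nadj.
- exact: indJ.
Qed.

Definition has_pendant y := [exists l, e y l && (deg l == 1)].

Lemma has_pendantW y l : e y l -> deg l = 1 -> has_pendant y.
Proof. by move=> eyl dl; apply/existsP; exists l; rewrite eyl dl. Qed.

Definition bare := [set y | (2 <= deg y) && ~~ has_pendant y].

Definition bare_core := [set y in bare | 2 <= #|nbhd e y :&: bare|].

Lemma bare_adj_deg u y : u \in bare -> e u y -> deg y != 1.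
Proof.
rewrite inE => /andP[_ noP] euy; apply: contra noP => /eqP dy.
exact: has_pendantW euy dy.
Qed.

Lemma pendant_support_notin_bare s l : e s l -> deg l = 1 -> s \notin bare.
Proof. by move=> esl dl; rewrite inE (has_pendantW esl dl) andbF. Qed.

Section BareCut.
Variable J : {set T}.
Hypotheses (J_core : J \subset bare_core) (J_indep : {in J &, forall x y, ~~ e x y})
  (J_dom : {in bare_core, forall w, w \notin J -> exists2 j, j \in J & e w j}).

Let W := bare :\: J.
(* Adding these pendant vertices lifts to 2 the count of their neighbours, which
   have exactly one neighbour in W. *)
Let L := [set l | (deg l == 1) && [exists s, e l s && (#|nbhd e s :&: W| == 1)]].
Let U := W :|: L.

Lemma W_deg_gt1 w : w \in W -> 2 <= deg w.
Proof. by rewrite !inE => /and3P[]. Qed.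

Lemma L_adj_card l d : l \in L -> e l d -> #|nbhd e d :&: W| = 1.
Proof.
rewrite inE => /andP[/eqP dl /existsP[s /andP[els /eqP cs]]] eld.
by rewrite (pendant_adj_uniq dl eld els).
Qed.

Lemma L_pendant_support s d : s \in L -> deg d = 1 -> e d s -> s \in W.
Proof.
move=> sL dd eds; have esd : e s d by rewrite e_sym.
have := L_adj_card sL esd; rewrite (nbhd_pendant dd eds) => c1.
have /card_gt0P[x] : 0 < #|[set s] :&: W| by rewrite c1.
by rewrite in_setI in_set1 => /andP[/eqP->].
Qed.

Lemma notin_U_deg x : deg x != 1 -> x \notin W -> x \notin U.
Proof. by move=> dx xW; rewrite in_setU negb_or xW inE negb_and dx. Qed.

Lemma cut_dominated u : u \in U -> exists2 w, w \notin U & e u w.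
Proof.
case/setUP=> [uW|].
  have ubare : u \in bare by move: uW; rewrite inE => /andP[].
  case: (boolP [exists p, e u p && (p \notin bare)]) => [/existsP[p /andP[eup pbare]]|].
    by exists p; rewrite // notin_U_deg ?(bare_adj_deg ubare eup) // inE negb_and pbare orbT.
  rewrite negb_exists => /forallP nbare.
  have ucore : u \in bare_core.
    rewrite inE ubare; suff /setIidPl-> : nbhd e u \subset bare by rewrite (W_deg_gt1 uW).
    by apply/subsetP=> p; rewrite in_nbhd => eup; have := nbare p; rewrite eup negbK.
  have [|j jJ euj] := J_dom ucore; first by move: uW; rewrite inE => /andP[].
  exists j => //; rewrite notin_U_deg ?inE ?jJ //.
  have: j \in bare by have := subsetP J_core j jJ; rewrite inE => /andP[].
  by rewrite inE => /andP[dj _]; rewrite neq_ltn dj orbT.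
rewrite inE => /andP[/eqP du /existsP[s /andP[eus /eqP cs]]].
have sW : s \notin W.
  by rewrite inE negb_and (pendant_support_notin_bare (_ : e s u) du) ?orbT // e_sym.
exists s => //; rewrite in_setU negb_or sW /=.
by apply: contra sW => sL; apply: L_pendant_support du eus.
Qed.

Lemma cut_nbhd_pendant d : has_pendant d -> #|nbhd e d :&: U| != 1.
Proof.
case/existsP=> l /andP[edl /eqP dl].
have [/eqP/cards1P[w Ew]|cW] := eqVneq #|nbhd e d :&: W| 1.
  have /setIP[edw wW] : w \in nbhd e d :&: W by rewrite Ew set11.
  have lL : l \in L.
    by rewrite inE dl eqxx; apply/existsP; exists d; rewrite e_sym edl Ew cards1.
  have wl : w != l by apply: contraTneq (W_deg_gt1 wW) => ->; rewrite dl.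
  have : [set w; l] \subset nbhd e d :&: U.
    by rewrite subUset !sub1set !in_setI !in_setU edw wW in_nbhd edl lL orbT.
  by move/subset_leq_card; rewrite cards2 wl; apply: contraTneq => ->.
suff -> : nbhd e d :&: U = nbhd e d :&: W by [].
apply/setP=> y; rewrite !in_setI in_setU in_nbhd; case edy: (e d y) => //=.
case: (boolP (y \in L)) => [yL|]; last by rewrite orbF.
have eyd : e y d by rewrite e_sym.
by rewrite (L_adj_card yL eyd) eqxx in cW.
Qed.

Lemma cut_nbhd_J d : d \in J -> 1 < #|nbhd e d :&: U|.
Proof.
move=> dJ; have : d \in bare_core := subsetP J_core d dJ.
rewrite inE => /andP[_ /leq_trans]; apply; apply/subset_leq_card/subsetP=> y.
rewrite !in_setI in_setU in_setD => /andP[edy ybare]; rewrite edy ybare andbT /=.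
by apply/orP; left; apply/negP=> yJ; have := J_indep dJ yJ; rewrite -in_nbhd edy.
Qed.

Lemma cut_nbhd d : d \notin U -> #|nbhd e d :&: U| != 1.
Proof.
move=> dU; have le_deg : #|nbhd e d :&: U| <= deg d by rewrite subset_leq_card ?subsetIl.
case: (ltngtP (deg d) 1) => [d0|d2|d1].
- by apply: contraTneq d0 => c1; rewrite -leqNgt -c1.
- case: (boolP (has_pendant d)) => [/cut_nbhd_pendant //|noP].
  have dJ : d \in J.
    by apply: contraR dU => dJ; rewrite in_setU in_setD dJ inE d2 noP.
  by rewrite gtn_eqF ?cut_nbhd_J.
- have /cards1P[s Es] : #|nbhd e d| == 1 by rewrite d1.
  have eds : e d s by rewrite -in_nbhd Es set11.
  have sW : s \notin W.
    by rewrite in_setD negb_and (pendant_support_notin_bare (_ : e s d) d1) ?orbT // e_sym.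
  have sL : s \notin L by apply: contra sW => sL; exact: L_pendant_support d1 eds.
  suff -> : nbhd e d :&: U = set0 by rewrite cards0.
  apply/setP=> x; rewrite Es in_setI in_set1 in_set0.
  by case: eqP => // ->; rewrite in_setU (negbTE sW) (negbTE sL).
Qed.

Lemma cut_neq0 : bare != set0 -> U != set0.
Proof.
case/set0Pn=> x xbare; apply/set0Pn; case: (boolP (x \in J)) => xJ; last first.
  by exists x; rewrite in_setU in_setD xJ xbare.
have : x \in bare_core := subsetP J_core x xJ.
rewrite inE => /andP[_ /ltnW/card_gt0P[y /setIP[exy ybare]]].
exists y; rewrite in_setU in_setD ybare andbT; apply/orP; left.
by apply/negP=> yJ; have := J_indep xJ yJ; rewrite -in_nbhd exy.
Qed.

Lemma certified_setC_cut : certified e (~: U).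
Proof. by apply/certified_setCP; split; [exact: cut_dominated | exact: cut_nbhd]. Qed.

End BareCut.

Section OnlyFullCertified.
Hypothesis only_full : forall D : {set T}, certified e D -> D = setT.

Lemma certified_setC_eq0 (U : {set T}) : certified e (~: U) -> U = set0.
Proof. by move/only_full/(congr1 (@setC T)); rewrite setCK setCT. Qed.

Lemma pendant_uniq s l1 l2 : e s l1 -> e s l2 -> deg l1 = 1 -> deg l2 = 1 -> l1 = l2.
Proof.
move=> esl1 esl2 dl1 dl2; apply/eqP; apply: contraT => l12.
have := certified_setC_eq0 (certified_setC_pendants esl1 esl2 dl1 dl2 l12).
by move/setP/(_ l1); rewrite !inE eqxx.
Qed.

Lemma deg2_has_pendant x : 1 < deg x -> has_pendant x.
Proof.
move=> dx; apply: contraT => noP.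
have [J [J_core J_indep J_dom]] := exists_dominating_independent bare_core.
have /(cut_neq0 J_core J_indep)/eqP[] : bare != set0.
  by apply/set0Pn; exists x; rewrite inE dx noP.
exact/certified_setC_eq0/(certified_setC_cut J_core J_indep J_dom).
Qed.

End OnlyFullCertified.

(** * Corona components *)

Definition pendant_of s := odflt s [pick l | e s l && (deg l == 1)].

Lemma pendant_ofP s : has_pendant s -> e s (pendant_of s) /\ deg (pendant_of s) = 1.
Proof.
rewrite /pendant_of; case: pickP => [l /andP[esl /eqP dl] _ | noP]; first by [].
by move=> /existsP[l]; rewrite noP.
Qed.

Lemma component_deg_gt0 v x : 1 < #|component e v| -> x \in component e v -> 0 < deg x.
Proof.
move=> Cgt1 xC; rewrite lt0n; apply: contraTneq Cgt1 => /cards0_eq nbx0.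
rewrite -(component_eq xC) -leqNgt -(cards1 x); apply: subset_leq_card.
apply: component_subset; first exact: set11.
by move=> y z /set1P-> exz; rewrite -in_nbhd nbx0 in_set0 in exz.
Qed.

Lemma component_pendant_pair w s :
  deg w = 1 -> deg s = 1 -> e w s -> component e w = [set w; s].
Proof.
move=> dw ds ews; apply/eqP; rewrite eqEsubset; apply/andP; split.
  apply: component_subset; first exact: set21.
  move=> x y /set2P[->|->] exy; first by rewrite (pendant_adj_uniq dw exy ews) set22.
  by rewrite -(pendant_adj_uniq ds (_ : e s w) exy) ?set21 // e_sym.
by rewrite subUset !sub1set mem_component (component_adj (mem_component w) ews).
Qed.

Section CoronaComponents.
Hypotheses
  (pendant_uniq : forall s l1 l2, e s l1 -> e s l2 -> deg l1 = 1 -> deg l2 = 1 -> l1 = l2)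
  (deg2_has_pendant : forall x, 1 < deg x -> has_pendant x).

Lemma corona_component_pendant_pair v :
  1 < #|component e v| -> {in component e v, forall x, deg x <= 1} ->
  is_corona e (component e v).
Proof.
move=> Cgt1 deg_le1.
have deg1 x : x \in component e v -> deg x = 1.
  by move=> xC; apply/eqP; rewrite eqn_leq deg_le1 ?(component_deg_gt0 Cgt1).
have /cards1P[u nbv] : deg v == 1 by rewrite deg1 ?mem_component.
have evu : e v u by rewrite -in_nbhd nbv set11.
have du := deg1 u (component_adj (mem_component v) evu).
exists [set v], (fun _ => u); split.
- by rewrite sub1set mem_component.
- by move=> x y /set1P-> /set1P->.
- by rewrite imset_set1 (component_pendant_pair (deg1 v (mem_component v)) du evu).
- by rewrite disjoints1 imset_set1 in_set1 adj_neq.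
- by move=> x /set1P->; apply: nbhd_pendant du _; rewrite e_sym.
Qed.

Lemma corona_component_hub v x0 :
  x0 \in component e v -> 1 < deg x0 -> is_corona e (component e v).
Proof.
move=> x0C dx0.
have Cgt1 : 1 < #|component e v|.
  have [ex0f _] := pendant_ofP (deg2_has_pendant dx0).
  by rewrite -(component_eq x0C); exact: component_card_gt1 ex0f.
pose S := [set x in component e v | 1 < deg x].
have fP s : s \in S -> e s (pendant_of s) /\ deg (pendant_of s) = 1.
  by rewrite inE => /andP[_ /deg2_has_pendant/pendant_ofP].
have SC : S \subset component e v by apply/subsetP=> x; rewrite inE => /andP[].
exists S, pendant_of; split=> //.
- move=> s t /fP[esf dsf] /fP[etf _] fst; have fse : e (pendant_of s) s by rewrite e_sym.
  by apply: pendant_adj_uniq dsf fse _; rewrite fst e_sym.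
- apply/eqP; rewrite eqEsubset subUset SC /=; apply/andP; split; last first.
    by apply/subsetP=> _ /imsetP[s sS ->]; apply: component_adj (subsetP SC s sS) (fP s sS).1.
  apply/subsetP=> w wC; rewrite in_setU inE wC /=.
  have [dw|dw] := ltnP 1 (deg w); first by [].
  have dw1 : deg w = 1 by apply/eqP; rewrite eqn_leq dw (component_deg_gt0 Cgt1 wC).
  have /cards1P[s nbw] : deg w == 1 by rewrite dw1.
  have ews : e w s by rewrite -in_nbhd nbw set11.
  have sC := component_adj wC ews.
  have ds : 1 < deg s.
    rewrite ltnNge; apply/negP=> ds; have ds1 : deg s = 1.
      by apply/eqP; rewrite eqn_leq ds (component_deg_gt0 Cgt1 sC).
    have := x0C; rewrite -(component_eq wC) (component_pendant_pair dw1 ds1 ews).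
    by case/set2P=> x0E; move: dx0; rewrite x0E ?dw1 ?ds1.
  have sS : s \in S by rewrite inE sC ds.
  have [esf dsf] := fP s sS.
  apply/orP; right; apply/imsetP; exists s => //.
  by apply: (pendant_uniq (s := s)) dw1 dsf; rewrite // e_sym.
- rewrite disjoint_subset; apply/subsetP=> x; rewrite inE => /andP[_ dx].
  by apply/imsetP=> -[s /fP[_ dsf] xE]; move: dx; rewrite xE dsf.
- by move=> s /fP[esf dsf]; apply: nbhd_pendant dsf _; rewrite e_sym.
Qed.

Lemma component_corona v : 1 < #|component e v| -> is_corona e (component e v).
Proof.
move=> Cgt1.
case: (boolP [exists x in component e v, 1 < deg x]) => [/exists_inP[x xC dx] | nohub].
  exact: corona_component_hub xC dx.
apply: corona_component_pendant_pair => // x xC; rewrite leqNgt.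
by apply: contra nohub => dx; apply/exists_inP; exists x.
Qed.

End CoronaComponents.

Lemma corona_components_iff_certified_setT :
  (forall v, 2 <= #|component e v| -> is_corona e (component e v)) <->
  (forall D : {set T}, certified e D -> D = setT).
Proof.
split=> [|full v]; first exact: corona_certified_setT.
by apply: component_corona; [exact: pendant_uniq | exact: deg2_has_pendant].
Qed.

End Graph.

Lemma bigmin_le_cond (I : finType) (P : pred I) (F : I -> nat) n j :
  P j -> \big[minn/n]_(i | P i) F i <= F j.
Proof.
move=> Pj; have: j \in index_enum I by rewrite mem_index_enum.
elim: (index_enum I) => //= i r IH; rewrite inE big_cons => /predU1P[<-|jr].
  by rewrite Pj geq_minl.
by case: (P i); [exact: leq_trans (geq_minr _ _) (IH jr) | exact: IH].
Qed.

Section CertifiedParameters.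
Variables (T : finType) (e : rel T).

Lemma card_geq_setT (D : {set T}) : (#|T| <= #|D|) = (D == setT).
Proof. by rewrite eqEcard subsetT cardsT. Qed.

Lemma gamma_cer_eq_card :
  gamma_cer e = #|T| <-> forall D : {set T}, certified e D -> D = setT.
Proof.
split=> [gam D certD | full].
  by apply/eqP; rewrite -card_geq_setT -gam; exact: bigmin_le_cond.
by apply: (big_ind (fun m => m = #|T|)) => [|m k -> ->|D /full->]; rewrite ?minnn ?cardsT.
Qed.

Lemma exists_minimal_certified : exists D : {set T}, minimal_certified e D.
Proof.
have [D /minsetP[certD minD] _] := minset_exists (certified_setT e).
exists D; rewrite /minimal_certified certD; apply/forall_inP=> E /properP[ED [x xD xE]].
by apply/negP=> certE; rewrite (minD E certE ED) xD in xE.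
Qed.

Lemma Gamma_cer_eq_card :
  Gamma_cer e = #|T| <-> forall D : {set T}, certified e D -> D = setT.
Proof.
split=> [Gam | full].
  have [|D0 minD0 GamE] := eq_bigmax_cond (A := minimal_certified e) (fun D => #|D|).
    by have [D minD] := exists_minimal_certified; apply/card_gt0P; exists D.
  have D0T : D0 = setT by apply/eqP; rewrite -card_geq_setT -Gam -GamE.
  move: minD0; rewrite D0T => /andP[_ /forall_inP noproper] D certD.
  by apply/eqP; apply: contraTT certD => DT; apply: noproper; rewrite properT.
have minT : minimal_certified e setT.
  rewrite /minimal_certified certified_setT; apply/forall_inP=> E.
  by rewrite properT; apply: contra => /full->.
rewrite /Gamma_cer (bigD1 setT) //= cardsT; apply/maxn_idPl/bigmax_leqP=> D _.
by rewrite -cardsT subset_leq_card ?subsetT.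
Qed.

End CertifiedParameters.

Unset Implicit Arguments.

Theorem theorem3p2 (T : finType) (e : rel T)
    (e_sym : symmetric e) (e_irr : irreflexive e) :
  [<-> (forall v : T, 2 <= #|component e v| -> is_corona e (component e v));
       gamma_cer e = #|T|;
       Gamma_cer e = #|T| ].
Proof.
have corona_iff := corona_components_iff_certified_setT e_sym e_irr.
tfae=> [/corona_iff/gamma_cer_eq_card | /gamma_cer_eq_card/Gamma_cer_eq_card |
        /Gamma_cer_eq_card/corona_iff] //.
Qed.
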